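(* With the mesh, coefficients $a^{(n)}_{n-k}$ and DCC kernels $p^{(n)}_{n-k}$ as in the context (in particular $\tau_{n-1}\le\tau_n$ for $2\le n\le N$), the DCC kernels are positive definite: for every $1\le n\le N$ and every real sequence $w_1,\dots,w_n$, $$\sum_{k=1}^n w_k\sum_{j=1}^k p^{(k)}_{k-j}w_j\ge 0 .$$
   Context: Fix $T>0$, $0<\alpha<1$ and a mesh $0=t_0<t_1<\dots<t_N=T$ with step sizes $\tau_n=t_n-t_{n-1}$ satisfying $\tau_{n-1}\le\tau_n$ for $2\le n\le N$. Set $t_{-1/2}=t_0$, $t_{n-1/2}=t_{n-1}+\tau_n/2$ for $1\le n\le N$, $\tau_{1/2}=\tau_1/2$ and $\tau_{n-1/2}=(\tau_n+\tau_{n-1})/2$ for $n\ge 2$. Let $\omega_\gamma(t)=t^{\gamma-1}/\Gamma(\gamma)$ for $t>0$. For $1\le n\le N$ and $1\le k\le n$ define $$a^{(n)}_{n-k}=\frac{1}{\tau_{k-1/2}}\int_{t_{k-3/2}}^{t_{k-1/2}}\omega_{1-\alpha}(t_{n-1/2}-s)\,ds .$$ The discrete complementary convolution (DCC) kernels are defined by $p^{(n)}_0=1/a^{(n)}_0$ and $p^{(n)}_{n-k}=\frac{1}{a^{(k)}_0}\sum_{j=k+1}^n\big(a^{(j)}_{j-k-1}-a^{(j)}_{j-k}\big)p^{(n)}_{n-j}$ for $1\le k\le n-1$; equivalently $\sum_{j=k}^n p^{(n)}_{n-j}a^{(j)}_{j-k}=1$ for all $1\le k\le n$. *)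

From HB Require Import structures.
From mathcomp Require Import all_boot all_order all_algebra.
From mathcomp Require Import all_classical all_reals all_analysis.
Set Implicit Arguments. Unset Strict Implicit. Unset Printing Implicit Defensive.
Import Order.TTheory GRing.Theory Num.Theory.
Local Open Scope classical_set_scope.
Local Open Scope ring_scope.

Section DCC.
Variable R : realType.

Definition Gamma (x : R) : R :=
  Rintegral (@lebesgue_measure R) `]0, +oo[%classic
    (fun s : R => s `^ (x - 1) * expR (- s)).

(* omega_gamma(t) = t^(gamma-1)/Gamma(gamma) for t > 0 (set to 0 for t <= 0,
   which only matters on a null set). *)
Definition omega (g t : R) : R :=
  if 0 < t then t `^ (g - 1) / Gamma g else 0.

Variable t : nat -> R.

Definition tau (n : nat) : R := t n - t n.-1.

(* tmid n = t_{n-1/2}; tmid 0 = t_{-1/2} = t_0 *)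
Definition tmid (n : nat) : R :=
  if n is n'.+1 then t n' + tau n / 2 else t 0.

Definition tauh (n : nat) : R :=
  if n == 1%N then tau 1 / 2 else (tau n + tau n.-1) / 2.

Variable alpha : R.

(* acoef n k = a^{(n)}_{n-k} *)
Definition acoef (n k : nat) : R :=
  (tauh k)^-1 *
  Rintegral (@lebesgue_measure R) `[tmid k.-1, tmid k]%classic
    (fun s : R => omega (1 - alpha) (tmid n - s)).

(* ptab n d i = p^{(n)}_i for i <= d, computed by the recursion
   p^{(n)}_0 = 1/a^{(n)}_0,
   p^{(n)}_{n-k} = 1/a^{(k)}_0 * sum_{j=k+1}^n (a^{(j)}_{j-k-1} - a^{(j)}_{j-k}) p^{(n)}_{n-j}. *)
Fixpoint ptab (n d : nat) : nat -> R :=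
  match d with
  | 0 => fun _ => (acoef n n)^-1
  | d'.+1 =>
      let f := ptab n d' in
      let k := (n - d'.+1)%N in
      fun i => if (i <= d')%N then f i else
        (acoef k k)^-1 *
        \sum_(k.+1 <= j < n.+1) (acoef j k.+1 - acoef j k) * f (n - j)%N
  end.

(* pker n i = p^{(n)}_i ; so p^{(n)}_{n-k} = pker n (n - k) *)
Definition pker (n i : nat) : R := ptab n i i.

End DCC.

From HB Require Import structures.
From mathcomp Require Import all_boot all_order all_algebra.
From mathcomp Require Import all_classical all_reals all_analysis.
From mathcomp Require Import ring lra measurable_realfun.
Import Order.TTheory GRing.Theory Num.Theory.
Import numFieldNormedType.Exports.
Set Implicit Arguments. Unset Strict Implicit. Unset Printing Implicit Defensive.
Local Open Scope ring_scope.

(* Write P_{kj} = p^{(k)}_{k-j} and let B be the matrix with B_{jj} = a^{(j)}_0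
   and B_{jm} = a^{(j)}_{j-m} - a^{(j)}_{j-m-1} for m < j (both are lower
   triangular).  The recursion defining
   the kernels says exactly P B = I, so for u = P^T w the form w^T P w equals
   u^T B u.  The off-diagonal entries of B are nonpositive and every row sum
   plus column sum is nonnegative; a quadratic form with these two properties
   is nonnegative (its symmetric part is diagonally dominant).

   The sign conditions come from the closed form
     a^{(n)}_{n-k} = ((1-alpha) Gamma(1-alpha))^-1 * slope of s |-> s^(1-alpha)
                     over [t_{n-1/2} - t_{k-1/2}, t_{n-1/2} - t_{k-3/2}],
   obtained from the fundamental theorem of calculus (with a monotone
   convergence argument at the singular endpoint), together with the fact that
   chord slopes of the concave power decrease when either endpoint moves right;
   the mesh condition tau_{k-1} <= tau_k makes the half-steps nondecreasing,
   which gives the column-sum bound. *)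

(* For M <= 0 the cross term x M y dominates M times the mean of the squares:
   the difference is -M (x - y)^2 / 2. *)
Lemma cross_term_ge (R : realFieldType) (M x y : R) :
  M <= 0 -> M * (x ^+ 2 + y ^+ 2) / 2 <= x * M * y.
Proof.
move=> M_le0; rewrite -subr_ge0.
have -> : x * M * y - M * (x ^+ 2 + y ^+ 2) / 2 = - M * (x - y) ^+ 2 / 2 by field.
by rewrite divr_ge0 // mulr_ge0 ?sqr_ge0 ?oppr_ge0.
Qed.

(* A quadratic form whose matrix has nonpositive off-diagonal entries and, in
   each index, a nonnegative row sum plus column sum is nonnegative: by
   [cross_term_ge] it dominates sum_i u_i^2 / 2 * (row_i + col_i). *)
Lemma quadform_ge0 (R : realFieldType) (M : nat -> nat -> R) (u : nat -> R)
    (n : nat) :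
  (forall i j, (1 <= i <= n)%N -> (1 <= j <= n)%N -> i != j -> M i j <= 0) ->
  (forall i, (1 <= i <= n)%N ->
     0 <= \sum_(1 <= j < n.+1) M i j + \sum_(1 <= j < n.+1) M j i) ->
  0 <= \sum_(1 <= i < n.+1) \sum_(1 <= j < n.+1) u i * M i j * u j.
Proof.
move=> M_offdiag M_sums.
apply: (@le_trans _ _ (\sum_(1 <= i < n.+1) \sum_(1 <= j < n.+1)
                         M i j * (u i ^+ 2 + u j ^+ 2) / 2)); last first.
  apply: ler_sum_nat => i /andP[i1 iN]; apply: ler_sum_nat => j /andP[j1 jN].
  have [->|ij] := eqVneq i j; last by apply/cross_term_ge/M_offdiag; rewrite ?i1 ?j1.
  by rewrite [leLHS](_ : _ = u j * M j j * u j) //; field.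
have -> : \sum_(1 <= i < n.+1) \sum_(1 <= j < n.+1) M i j * (u i ^+ 2 + u j ^+ 2) / 2 =
    \sum_(1 <= i < n.+1) (u i ^+ 2 / 2) *
      (\sum_(1 <= j < n.+1) M i j + \sum_(1 <= j < n.+1) M j i).
  transitivity (\sum_(1 <= i < n.+1) \sum_(1 <= j < n.+1) M i j * (u i ^+ 2 / 2) +
                \sum_(1 <= i < n.+1) \sum_(1 <= j < n.+1) M i j * (u j ^+ 2 / 2)).
    rewrite -big_split /=; apply: eq_bigr => i _.
    by rewrite -big_split /=; apply: eq_bigr => j _; field.
  rewrite [X in _ + X]exchange_big /= -big_split /=; apply: eq_bigr => i _.
  by rewrite mulrDr !mulr_sumr; congr (_ + _); apply: eq_bigr => j _; rewrite mulrC.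
rewrite big_nat_cond; apply: sumr_ge0 => i /andP[/andP[i1 iN] _].
by rewrite mulr_ge0 ?divr_ge0 ?sqr_ge0 // M_sums // i1 -ltnS.
Qed.

Section KernelInverse.
Variables (R : realFieldType) (a pk : nat -> nat -> R) (n : nat).

Definition kmat (k j : nat) : R := if (j <= k)%N then pk k (k - j) else 0.

Definition bmat (j m : nat) : R :=
  if (m <= j)%N then a j m - (if (m < j)%N then a j m.+1 else 0) else 0.

Hypothesis pk_diag : forall k, (1 <= k <= n)%N -> pk k 0 * a k k = 1.
Hypothesis pk_rec : forall k m, (1 <= m)%N -> (m < k <= n)%N ->
  a m m * pk k (k - m) = \sum_(m.+1 <= j < k.+1) (a j m.+1 - a j m) * pk k (k - j).

Lemma kmat_bmat k m : (1 <= k <= n)%N -> (1 <= m <= n)%N ->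
  \sum_(1 <= j < n.+1) kmat k j * bmat j m = (k == m)%:R.
Proof.
move=> /andP[k1 kn] /andP[m1 mn].
have [km|mk] := ltnP k m.
  rewrite (ltn_eqF km) big1_seq // => j _; rewrite /kmat /bmat.
  case: ifP => jk; last by rewrite mul0r.
  by rewrite (ltn_geF (leq_ltn_trans jk km)) mulr0.
rewrite (big_cat_nat _ (n := m)) //=; last exact: leqW.
rewrite [X in X + _]big1_seq ?add0r; last first.
  move=> j; rewrite mem_index_iota => /andP[_ /andP[_ jm]].
  by rewrite /bmat (ltn_geF jm) mulr0.
rewrite (big_cat_nat _ (n := k.+1)) //=; try (by apply: leqW); try (by rewrite ltnS).
rewrite [X in _ + X]big1_seq ?addr0; last first.
  move=> j; rewrite mem_index_iota => /andP[_ /andP[kj _]].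
  by rewrite /kmat (ltn_geF kj) mul0r.
rewrite big_ltn // /kmat /bmat leqnn ltnn subr0 mk.
move: mk; rewrite leq_eqVlt => /orP[/eqP mk|mk].
  by rewrite mk eqxx big_geq // subnn addr0 pk_diag // k1.
rewrite (gtn_eqF mk) mulrC pk_rec //; last by rewrite mk.
rewrite -big_split /= big1_seq // => j; rewrite mem_index_iota => /andP[_ /andP[mj jk]].
rewrite -ltnS jk (ltnW mj) mj; ring.
Qed.

Variable w : nat -> R.

Definition kdual (j : nat) : R := \sum_(1 <= k < n.+1) w k * kmat k j.

(* Since P B = I, B^T u = w. *)
Lemma kdual_bmat m : (1 <= m <= n)%N ->
  \sum_(1 <= i < n.+1) kdual i * bmat i m = w m.
Proof.
move=> hm; transitivity (\sum_(1 <= k < n.+1) w k * (k == m)%:R).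
  rewrite /kdual; under eq_bigr do rewrite mulr_suml.
  rewrite exchange_big /=; apply: eq_big_nat => k hk.
  by rewrite -(kmat_bmat hk hm) mulr_sumr; apply: eq_bigr => i _; rewrite mulrA.
rewrite (bigD1_seq m) ?mem_index_iota ?iota_uniq //= eqxx mulr1 big1 ?addr0 //.
by move=> k /negPf ->; rewrite mulr0.
Qed.

Lemma kernel_form_bmat :
  \sum_(1 <= k < n.+1) w k * \sum_(1 <= j < k.+1) pk k (k - j)%N * w j =
  \sum_(1 <= i < n.+1) \sum_(1 <= m < n.+1) kdual i * bmat i m * kdual m.
Proof.
transitivity (\sum_(1 <= k < n.+1) \sum_(1 <= j < n.+1) w k * kmat k j * w j).
  apply: eq_big_nat => k /andP[k1 kn].
  rewrite mulr_sumr [RHS](big_cat_nat _ (n := k.+1)) //=;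
    try (by rewrite ltnS); try (by apply: leqW).
  rewrite [X in _ = _ + X]big1_seq ?addr0; last first.
    move=> j; rewrite mem_index_iota => /andP[_ /andP[kj _]].
    by rewrite /kmat (ltn_geF kj) mulr0 mul0r.
  by apply: eq_big_nat => j /andP[_ jk]; rewrite /kmat -ltnS jk mulrA.
transitivity (\sum_(1 <= m < n.+1) w m * kdual m).
  rewrite exchange_big /=; apply: eq_bigr => m _.
  by rewrite /kdual mulr_sumr; apply: eq_bigr => k _; rewrite [RHS]mulrC.
rewrite [RHS]exchange_big /=; apply: eq_big_nat => m hm.
by rewrite -{1}(kdual_bmat hm) mulr_suml.
Qed.

Hypothesis a_incr : forall k j, (1 <= j)%N -> (j < k <= n)%N -> a k j <= a k j.+1.

Lemma bmat_offdiag_le0 i j : (1 <= j)%N -> (i <= n)%N -> i != j -> bmat i j <= 0.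
Proof.
move=> j1 iN ij; rewrite /bmat; case: ifP => // ji.
have jlti : (j < i)%N by rewrite ltn_neqAle ji eq_sym ij.
by rewrite jlti subr_le0 a_incr // jlti.
Qed.

(* The row sums of B telescope to a i 1. *)
Lemma bmat_row_sum i : (1 <= i <= n)%N -> \sum_(1 <= j < n.+1) bmat i j = a i 1.
Proof.
move=> /andP[i1 iN].
rewrite (big_cat_nat _ (n := i.+1)) //= [X in _ + X]big1_seq ?addr0; last first.
  move=> j; rewrite mem_index_iota => /andP[_ /andP[ij _]].
  by rewrite /bmat (ltn_geF ij).
rewrite big_nat_recr //= /bmat leqnn ltnn subr0.
rewrite (eq_big_nat _ _ (F2 := fun j => - (a i j.+1 - a i j))); last first.
  by move=> j /andP[_ ji]; rewrite (ltnW ji) ji opprB.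
rewrite sumrN telescope_sumr //; ring.
Qed.

Hypothesis a_shift : forall m k, (1 <= k)%N -> (k < m <= n)%N -> a m k.+1 <= a m.-1 k.

Lemma bmat_col_sum_ge i : (1 <= i <= n)%N -> a n i <= \sum_(1 <= j < n.+1) bmat j i.
Proof.
move=> /andP[i1 iN].
rewrite (big_cat_nat _ (n := i)) //=; last exact: leqW.
rewrite [X in _ <= X + _]big1_seq ?add0r; last first.
  move=> j; rewrite mem_index_iota => /andP[_ /andP[_ ji]].
  by rewrite /bmat (ltn_geF ji).
rewrite big_ltn ?ltnS // /bmat leqnn ltnn subr0.
apply: (@le_trans _ _ (a i i + \sum_(i.+1 <= j < n.+1) (a j i - a j.-1 i))).
  by rewrite big_add1 /= telescope_sumr //; lra.
rewrite lerD2l; apply: ler_sum_nat => j /andP[ij jn].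
by rewrite (ltnW ij) ij lerD2l lerN2 a_shift // ij -ltnS.
Qed.

Hypothesis a_ge0 : forall m k, (1 <= k <= m)%N -> (m <= n)%N -> 0 <= a m k.

Theorem kernel_form_ge0 :
  0 <= \sum_(1 <= k < n.+1) w k * \sum_(1 <= j < k.+1) pk k (k - j)%N * w j.
Proof.
rewrite kernel_form_bmat; apply: quadform_ge0.
  by move=> i j /andP[_ iN] /andP[j1 _]; exact: bmat_offdiag_le0.
move=> i /andP[i1 iN]; rewrite bmat_row_sum ?i1 //.
apply: addr_ge0; first by rewrite a_ge0 ?i1.
have col : a n i <= \sum_(1 <= j < n.+1) bmat j i by apply: bmat_col_sum_ge; rewrite i1.
by apply: le_trans col; rewrite a_ge0 ?i1 ?leqnn.
Qed.
End KernelInverse.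

Section PkerRecursion.
Variables (R : realType) (t : nat -> R) (alpha : R).
Local Notation a := (acoef t alpha).
Local Notation p := (pker t alpha).

Lemma ptab_stable n d i : (i <= d)%N -> ptab t alpha n d i = p n i.
Proof.
rewrite /pker; elim: d => [|d IH]; first by rewrite leqn0 => /eqP ->.
rewrite leq_eqVlt => /orP[/eqP ->|id] //.
by rewrite /= -ltnS id IH.
Qed.

Lemma pker0 n : p n 0 = (a n n)^-1.
Proof. by []. Qed.

Lemma pkerS k m : (m < k)%N ->
  p k (k - m) = (a m m)^-1 * \sum_(m.+1 <= j < k.+1) (a j m.+1 - a j m) * p k (k - j).
Proof.
move=> mk; have -> : (k - m = (k - m.+1).+1)%N by rewrite subnSK.
rewrite {1}/pker /= ltnn subnSK // subKn ?(ltnW mk) //.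
congr (_ * _); apply: eq_big_nat => j /andP[mj jk].
by rewrite ptab_stable // leq_sub2l.
Qed.

(* With the convention 0^-1 = 0, a vanishing diagonal coefficient a^{(j)}_0
   forces the kernel p^{(k)}_{k-j} to vanish. *)
Lemma pker_eq0 k j : (j <= k)%N -> a j j = 0 -> p k (k - j) = 0.
Proof.
rewrite leq_eqVlt => /orP[/eqP ->|jk] a0; first by rewrite subnn pker0 a0 invr0.
by rewrite pkerS // a0 invr0 mul0r.
Qed.
End PkerRecursion.

Local Open Scope classical_set_scope.

Section PowerIntegral.
Variable R : realType.

Lemma harmonic_cvg_0_right : (@harmonic R) @ \oo --> (0 : R)^'+.
Proof.
move=> A A0; have := cvg_harmonic A0.
exact: filterS (fun n h => h (harmonic_gt0 n)).
Qed.

Lemma is_derive_powR_sub (c e s : R) : s < c ->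
  is_derive s 1 (fun s => (c - s) `^ e) (e * (c - s) `^ (e - 1) * -1).
Proof.
move=> sc.
have dsub : is_derive s 1 (fun s : R => c - s) (-1).
  have D := @is_deriveB _ _ _ (cst c) id s 1 0 1 _ _.
  by rewrite sub0r in D; exact: D.
have dpow : is_derive (c - s) 1 (fun x : R => x `^ e) (e * (c - s) `^ (e - 1)).
  by apply: is_derive1_powR; rewrite subr_gt0.
exact: (is_derive1_comp (f := fun x : R => x `^ e) (g := fun s : R => c - s) dpow dsub).
Qed.

Variables (g G c : R).
Hypothesis g_gt0 : 0 < g.

Definition powker (s : R) : R := G^-1 * (c - s) `^ (g - 1).
Definition powker_prim (s : R) : R := - (g * G)^-1 * (c - s) `^ g.

Lemma powker_derivable s : s < c -> derivable powker s 1.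
Proof. by move=> sc; case: (is_deriveZ G^-1 (is_derive_powR_sub (g - 1) sc)). Qed.

Lemma powker_prim_derive s : s < c -> is_derive s 1 powker_prim (powker s).
Proof.
move=> sc; have D := is_deriveZ (- (g * G)^-1) (is_derive_powR_sub g sc).
suff -> : powker s = - (g * G)^-1 *: (g * (c - s) `^ (g - 1) * -1) by [].
rewrite /powker /GRing.scale /= invfM.
rewrite [RHS](_ : _ = (g^-1 * g) * (G^-1 * (c - s) `^ (g - 1))); last by ring.
by rewrite mulVf ?gt_eqF // mul1r.
Qed.

Lemma powker_prim_cont s : s < c -> powker_prim x @[x --> s] --> powker_prim s.
Proof.
move=> sc; apply: differentiable_continuous; apply/derivable1_diffP.
by case: (powker_prim_derive sc).
Qed.

Lemma integral_powker_regular p q : p < q -> q < c ->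
  (\int[lebesgue_measure]_(x in `[p, q]) (powker x)%:E =
   (powker_prim q - powker_prim p)%:E)%E.
Proof.
move=> pq qc; apply: continuous_FTC2 => //.
- apply: derivable_within_continuous => x; rewrite in_itv /= => /andP[_ xq].
  exact: powker_derivable (le_lt_trans xq qc).
- split.
  + move=> x; rewrite in_itv /= => /andP[_ xq].
    by case: (powker_prim_derive (lt_trans xq qc)).
  + exact/cvg_at_right_filter/(powker_prim_cont (lt_trans pq qc)).
  + exact/cvg_at_left_filter/(powker_prim_cont qc).
- move=> x; rewrite in_itv /= => /andP[_ xq].
  by rewrite derive1E; case: (powker_prim_derive (lt_trans xq qc)).
Qed.

Lemma itv_exhaust p : p < c ->
  \bigcup_i `[p, c - (c - p) * harmonic i] = `[p, c[.
Proof.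
move=> pc; have cp0 : 0 < c - p by rewrite subr_gt0.
apply/seteqP; split.
  move=> x [i _]; rewrite /= !in_itv /= => /andP[px xe]; rewrite px /=.
  by rewrite (le_lt_trans xe) // ltrBlDr ltrDl mulr_gt0 // harmonic_gt0.
move=> x; rewrite /= in_itv /= => /andP[px xc].
have xc0 : 0 < c - x by rewrite subr_gt0.
exists (Num.bound ((c - p) / (c - x)))%N => //.
rewrite /= in_itv /= px lerBrDr -lerBrDl /= ler_pdivrMr ?ltr0n //.
have bound : (c - p) / (c - x) <= (Num.bound ((c - p) / (c - x))).+1%:R.
  by rewrite (le_trans (ltW (archi_boundP _))) ?ler_nat // divr_ge0 // ltW.
rewrite -{1}[c - p](@divfK _ (c - x)) ?gt_eqF // [X in X <= _]mulrC.
by rewrite ler_pM2l.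
Qed.

Lemma powker_prim_harmonic p : p < c ->
  powker_prim (c - (c - p) * harmonic i) @[i --> \oo] --> powker_prim c.
Proof.
move=> pc; have cp0 : 0 < c - p by rewrite subr_gt0.
have -> : (fun i => powker_prim (c - (c - p) * harmonic i)) =
    (fun i => - (g * G)^-1 * ((c - p) `^ g * harmonic i `^ g)).
  apply/funext => i; rewrite /powker_prim.
  rewrite (_ : c - (c - (c - p) * harmonic i) = (c - p) * harmonic i); last by ring.
  by rewrite powRM // ?harmonic_ge0 // ltW.
have -> : powker_prim c = - (g * G)^-1 * ((c - p) `^ g * 0).
  by rewrite /powker_prim subrr powR0 ?mulr0 // gt_eqF.
apply: cvgMl_tmp; apply: cvgMl_tmp.
exact: (cvg_comp _ _ harmonic_cvg_0_right (powR_cvg0 g_gt0)).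
Qed.

Hypothesis G_ge0 : 0 <= G.

Lemma powker_ge0 s : 0 <= powker s.
Proof. by rewrite mulr_ge0 ?invr_ge0 ?powR_ge0. Qed.

Lemma measurable_powker (D : set R) : measurable_fun D powker.
Proof.
apply: measurable_funTS; apply: measurable_funM; first exact: measurable_cst.
apply: (measurableT_comp (measurable_powR _)).
by apply: measurable_funB; [exact: measurable_cst | exact: measurable_id].
Qed.

(* Up to the singularity, by monotone convergence on the exhausting intervals
   of [itv_exhaust]. *)
Lemma integral_powker_singular p : p < c ->
  (\int[lebesgue_measure]_(x in `[p, c]) (powker x)%:E =
   (powker_prim c - powker_prim p)%:E)%E.
Proof.
move=> pc; have cp0 : 0 < c - p by rewrite subr_gt0.
pose e i := c - (c - p) * harmonic i.
pose S i := `[p, e i].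
have S_incr : nondecreasing_seq S.
  move=> i j ij; rewrite subsetEset; apply: subset_itvl; rewrite bnd_simp.
  by rewrite /e lerD2l lerN2 ler_pM2l //= lef_pV2 ?posrE ?ltr0n // ler_nat.
have mpowker i : measurable_fun (S i) (EFin \o powker).
  by apply/measurable_EFinP; exact: measurable_powker.
have lim_int := @ge0_nondecreasing_set_cvg_integral _ (measurableTypeR R) R S
  (EFin \o powker) lebesgue_measure S_incr (fun i => measurable_itv _) mpowker
  (fun i x _ => powker_ge0 x : (0 <= _%:E)%E).
have int_S i : (\int[lebesgue_measure]_(x in S i) (EFin \o powker) x =
                (powker_prim (e i) - powker_prim p)%:E)%E.
  case: i => [|i].
    rewrite /S (_ : e 0%N = p) ?set_itv1 ?integral_set1 ?subrr //.
    by rewrite /e /= invr1 mulr1 opprB addrC subrK.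
  apply: integral_powker_regular; last by rewrite /e ltrBlDr ltrDl mulr_gt0 // harmonic_gt0.
  rewrite /e ltrBrDl -ltrBrDr -{2}[c - p]mulr1 ltr_pM2l //=.
  by rewrite invf_lt1 ?ltr0n // ltr1n.
have lim_prim : (\int[lebesgue_measure]_(x in S i) (EFin \o powker) x)%E
    @[i --> \oo] --> (powker_prim c - powker_prim p)%:E.
  rewrite (funext int_S); apply: cvg_EFin; first exact: nearW.
  by apply: cvgB; [exact: powker_prim_harmonic | exact: cvg_cst].
rewrite -integral_itv_bndo_bndc; last by apply/measurable_EFinP; exact: measurable_powker.
by rewrite -(itv_exhaust pc); exact: (cvg_unique _ lim_int lim_prim).
Qed.
End PowerIntegral.

Local Close Scope classical_set_scope.

Section ChordSlopes.
Variables (R : realFieldType) (f : R -> R).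

Definition slope (x y : R) : R := (f y - f x) / (y - x).

Lemma slope_split x y z : x < y -> y < z ->
  (z - x) * slope x z = (y - x) * slope x y + (z - y) * slope y z.
Proof.
move=> xy yz; have ne0 u v : u < v -> v - u != 0 by move=> uv; rewrite subr_eq0 gt_eqF.
by rewrite /slope; field; rewrite !ne0 // (lt_trans xy yz).
Qed.

Lemma slope_between x y z : x < y -> y < z -> slope y z <= slope x y ->
  slope y z <= slope x z <= slope x y.
Proof.
move=> xy yz le_yz_xy; have split := slope_split xy yz.
by apply/andP; split; nra.
Qed.

Hypothesis chord_decr : forall x y z, 0 <= x -> x < y -> y < z -> slope y z <= slope x y.

Lemma slope_antitone x1 y1 x2 y2 : 0 <= x1 -> x1 < y1 -> x1 <= x2 -> y1 <= y2 ->
  x2 < y2 -> slope x2 y2 <= slope x1 y1.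
Proof.
move=> x1_ge0 xy1 x12 y12 xy2.
have xy12 : x1 < y2 by apply: lt_le_trans y12.
apply: (@le_trans _ _ (slope x1 y2)).
  move: x12; rewrite le_eqVlt => /orP[/eqP <-|x12] //.
  by case/andP: (slope_between x12 xy2 (chord_decr x1_ge0 x12 xy2)).
move: y12; rewrite le_eqVlt => /orP[/eqP <-|y12] //.
by case/andP: (slope_between xy1 y12 (chord_decr x1_ge0 xy1 y12)).
Qed.
End ChordSlopes.

Section PowerSlopes.
Variables (R : realType) (g : R).
Hypotheses (g_gt0 : 0 < g) (g_lt1 : g < 1).

Local Notation pslope := (slope (fun s : R => s `^ g)).

Lemma powR_mvt x y : 0 < x -> x < y ->
  exists2 z, x < z < y & y `^ g - x `^ g = g * z `^ (g - 1) * (y - x).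
Proof.
move=> x_gt0 xy.
case: (@MVT R (fun s => s `^ g) (fun s => g * s `^ (g - 1)) x y xy).
- move=> s; rewrite in_itv /= => /andP[xs _].
  exact/is_derive1_powR/(lt_trans x_gt0 xs).
- apply: derivable_within_continuous => s; rewrite in_itv /= => /andP[xs _].
  by case: (@is_derive1_powR R g s (lt_le_trans x_gt0 xs)).
- by move=> z; rewrite in_itv /= => xzy ->; exists z.
Qed.

Lemma powR_pred_antitone z w : 0 < z -> z <= w -> w `^ (g - 1) <= z `^ (g - 1).
Proof.
move=> z_gt0 zw; have w_gt0 := lt_le_trans z_gt0 zw.
have -> : g - 1 = - (1 - g) by ring.
rewrite !powRN lef_pV2 ?posrE ?powR_gt0 //.
by apply: ge0_ler_powR => //; rewrite ?nnegrE ?subr_ge0 ?ltW.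
Qed.

(* The power s |-> s^g is concave on [0, +oo[: consecutive chords decrease.
   Both chords are compared with the derivative g y^(g-1) at the middle point
   (for x = 0 directly, since y^g / y = y^(g-1) >= g y^(g-1)). *)
Lemma powR_chord_decr x y z : 0 <= x -> x < y -> y < z -> pslope y z <= pslope x y.
Proof.
move=> x_ge0 xy yz; have y_gt0 := le_lt_trans x_ge0 xy.
have [z2 /andP[yz2 z2z] mvt2] := powR_mvt y_gt0 yz.
have -> : pslope y z = g * z2 `^ (g - 1) by rewrite /slope mvt2 mulfK // subr_eq0 gt_eqF.
have z2y : z2 `^ (g - 1) <= y `^ (g - 1) by apply: powR_pred_antitone => //; exact: ltW.
move: x_ge0; rewrite le_eqVlt => /orP[/eqP x0|x_gt0].
  rewrite /slope -x0 powR0 ?gt_eqF // !subr0.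
  rewrite -[in X in _ <= X / _](mulr_powRB1 (ltW y_gt0) g_gt0) (mulrC y) mulfK ?gt_eqF //.
  apply: (@le_trans _ _ (g * y `^ (g - 1))); first by rewrite ler_pM2l.
  by rewrite -{2}[y `^ (g - 1)]mul1r ler_pM2r ?powR_gt0 ?ltW.
have [z1 /andP[xz1 z1y] mvt1] := powR_mvt x_gt0 xy.
rewrite /slope mvt1 mulfK ?subr_eq0 ?gt_eqF // ler_pM2l //.
by apply: powR_pred_antitone; [exact: lt_trans xz1 | exact: ltW (lt_trans z1y yz2)].
Qed.

Lemma powR_slope_ge0 x y : 0 <= x -> x < y -> 0 <= pslope x y.
Proof.
move=> x_ge0 xy; rewrite /slope divr_ge0 ?subr_ge0 ?(ltW xy) //.
by apply: ge0_ler_powR; rewrite ?nnegrE ?(ltW g_gt0) ?(ltW xy) // (le_trans x_ge0 (ltW xy)).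
Qed.

Lemma powR_slope0_gt0 y : 0 < y -> 0 < pslope 0 y.
Proof. by move=> y_gt0; rewrite /slope powR0 ?gt_eqF // !subr0 divr_gt0 // powR_gt0. Qed.
End PowerSlopes.

Section Mesh.
Variables (R : realType) (N : nat) (t : nat -> R).
Hypothesis t_incr : forall n, (1 <= n <= N)%N -> t n.-1 < t n.
Local Notation c := (tmid t).

Lemma tmid_step k : (1 <= k)%N -> c k - c k.-1 = tauh t k.
Proof. by case: k => [|[|k]] // _; rewrite /tmid /tauh /tau /=; field. Qed.

Lemma tau_gt0 k : (1 <= k <= N)%N -> 0 < tau t k.
Proof. by move=> hk; rewrite /tau subr_gt0 t_incr. Qed.

Lemma tauh_gt0 k : (1 <= k <= N)%N -> 0 < tauh t k.
Proof.
case: k => [|[|k]] // /andP[_ kN]; first by rewrite /tauh divr_gt0 // tau_gt0.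
by rewrite /tauh /= divr_gt0 // addr_gt0 // tau_gt0 // (ltnW kN).
Qed.

Lemma tmid_lt_succ k : (k < N)%N -> c k < c k.+1.
Proof. by move=> kN; rewrite -subr_gt0 (tmid_step (isT : (0 < k.+1)%N)) tauh_gt0. Qed.

Lemma tmid_le j k : (j <= k <= N)%N -> c j <= c k.
Proof.
elim: k => [|k IH]; first by rewrite leqn0 => /andP[/eqP ->].
move=> /andP[jk kN]; move: jk; rewrite leq_eqVlt => /orP[/eqP -> //|jk].
apply: (le_trans _ (ltW (tmid_lt_succ kN))).
by apply: IH; rewrite -ltnS jk ltnW.
Qed.

Lemma tmid_lt j k : (j < k <= N)%N -> c j < c k.
Proof.
case: k => [|k] // /andP[jk kN].
by apply: le_lt_trans (tmid_lt_succ kN); rewrite tmid_le // -ltnS jk ltnW.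
Qed.

Hypothesis tau_mono : forall n, (2 <= n <= N)%N -> tau t n.-1 <= tau t n.

Lemma tauh_step k : (1 <= k)%N -> (k < N)%N -> tauh t k <= tauh t k.+1.
Proof.
case: k => [|[|k]] // _ kN.
  by rewrite /tauh /= ler_pM2r // lerDr ltW // tau_gt0.
rewrite /tauh /= ler_pM2r // lerD //.
  by apply: (@tau_mono k.+3); rewrite kN.
by apply: (@tau_mono k.+2); rewrite /= (ltn_trans _ kN).
Qed.

Lemma tauh_mono k m : (1 <= k <= m)%N -> (m <= N)%N -> tauh t k <= tauh t m.
Proof.
elim: m => [|m IH]; first by case/andP => k1 /(leq_trans k1).
move=> /andP[k1 km] mN; move: km; rewrite leq_eqVlt => /orP[/eqP -> //|km].
have m1 : (1 <= m)%N := leq_trans k1 km.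
apply: (le_trans _ (tauh_step m1 mN)).
by apply: IH (ltnW mN); rewrite k1.
Qed.
End Mesh.

Lemma Gamma_ge0 (R : realType) (x : R) : 0 <= Gamma x.
Proof.
rewrite /Gamma; apply: Rintegral_ge0 => s _.
by rewrite mulr_ge0 ?powR_ge0 ?expR_ge0.
Qed.

Local Open Scope classical_set_scope.

Lemma Rintegral_omega (R : realType) (g p q c : R) : 0 < g < 1 -> p < q -> q <= c ->
  Rintegral (@lebesgue_measure R) `[p, q] (fun s => omega g (c - s)) =
  powker_prim g (Gamma g) c q - powker_prim g (Gamma g) c p.
Proof.
move=> /andP[g_gt0 g_lt1] pq qc; rewrite /Rintegral.
rewrite (_ : (\int[lebesgue_measure]_(x in `[p, q]) (omega g (c - x))%:E =
    \int[lebesgue_measure]_(x in `[p, q]) (powker g (Gamma g) c x)%:E)%E); last first.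
  apply: eq_integral => s; rewrite inE /= in_itv /= => /andP[_ sq]; congr EFin.
  rewrite /omega /powker; case: ifP => [_|]; first by rewrite mulrC.
  move/negbT; rewrite -leNgt subr_le0 => cs.
  have -> : s = c by apply/le_anti; rewrite cs (le_trans sq qc).
  by rewrite subrr powR0 ?mulr0 // subr_eq0 lt_eqF.
move: qc; rewrite le_eqVlt => /orP[/eqP <-|qc].
  by rewrite integral_powker_singular ?Gamma_ge0.
by rewrite integral_powker_regular.
Qed.

Local Close Scope classical_set_scope.

Section ClosedForm.
Variables (R : realType) (alpha : R) (N : nat) (t : nat -> R).
Hypothesis alpha01 : 0 < alpha < 1.
Hypothesis t_incr : forall n, (1 <= n <= N)%N -> t n.-1 < t n.
Local Notation c := (tmid t).
Local Notation g := (1 - alpha).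
Local Notation a := (acoef t alpha).
Local Notation pslope := (slope (fun s : R => s `^ g)).

Lemma exponent01 : 0 < g < 1.
Proof. by case/andP: alpha01 => a0 a1; rewrite subr_gt0 a1 ltrBlDr ltrDl. Qed.

Lemma acoef_slope n k : (1 <= k <= n)%N -> (n <= N)%N ->
  a n k = (g * Gamma g)^-1 * pslope (c n - c k) (c n - c k.-1).
Proof.
move=> /andP[k1 kn] nN.
have ck : c k.-1 < c k by apply: (tmid_lt t_incr); rewrite prednK // leqnn (leq_trans kn nN).
have ckn : c k <= c n by apply: (tmid_le t_incr); rewrite kn.
rewrite /acoef Rintegral_omega ?exponent01 // -tmid_step // /slope /powker_prim.
have -> : c n - c k.-1 - (c n - c k) = c k - c k.-1 by ring.
ring.
Qed.
End ClosedForm.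

Section SignConditions.
Variables (R : realType) (alpha : R) (N : nat) (t : nat -> R).
Hypothesis alpha01 : 0 < alpha < 1.
Hypothesis t_incr : forall n, (1 <= n <= N)%N -> t n.-1 < t n.
Local Notation c := (tmid t).
Local Notation g := (1 - alpha).
Local Notation a := (acoef t alpha).

Let g_gt0 : 0 < g. Proof. by case/andP: (exponent01 alpha01). Qed.
Let g_lt1 : g < 1. Proof. by case/andP: (exponent01 alpha01). Qed.
Let kappa_ge0 : 0 <= (g * Gamma g)^-1.
Proof. by rewrite invr_ge0 mulr_ge0 ?Gamma_ge0 ?ltW. Qed.
Let c_le j k : (j <= k <= N)%N -> c j <= c k. Proof. exact: tmid_le. Qed.
Let c_lt j k : (j < k <= N)%N -> c j < c k. Proof. exact: tmid_lt. Qed.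

(* The coefficients are nonnegative chord slopes of a nondecreasing map. *)
Lemma acoef_ge0 m k : (1 <= k <= m)%N -> (m <= N)%N -> 0 <= a m k.
Proof.
move=> /andP[k1 km] mN; rewrite (acoef_slope alpha01 t_incr) ?k1 // mulr_ge0 //.
apply: powR_slope_ge0 => //; first by rewrite subr_ge0 c_le ?km.
by rewrite ltrD2l ltrN2 c_lt // prednK // leqnn (leq_trans km mN).
Qed.

(* The diagonal coefficient a^{(k)}_0 is the slope of the chord from 0, scaled
   by ((1-alpha) Gamma(1-alpha))^-1; it vanishes exactly with Gamma(1-alpha). *)
Lemma acoef_diag_eq0 k : Gamma g = 0 -> (1 <= k <= N)%N -> a k k = 0.
Proof.
move=> G0 /andP[k1 kN]; rewrite (acoef_slope alpha01 t_incr) ?k1 ?leqnn //.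
apply/eqP; rewrite mulf_eq0 invr_eq0 mulf_eq0; apply/orP; left.
by apply/orP; right; apply/eqP.
Qed.

Lemma acoef_diag_neq0 k : Gamma g != 0 -> (1 <= k <= N)%N -> a k k != 0.
Proof.
move=> G0 /andP[k1 kN]; rewrite (acoef_slope alpha01 t_incr) ?k1 ?leqnn // subrr.
apply: mulf_neq0; first by rewrite invr_eq0 mulf_neq0 // gt_eqF.
by rewrite gt_eqF // powR_slope0_gt0 // subr_gt0 c_lt // prednK // leqnn.
Qed.

Lemma acoef_incr k j : (1 <= j)%N -> (j < k <= N)%N -> a k j <= a k j.+1.
Proof.
move=> j1 /andP[jk kN]; rewrite !(acoef_slope alpha01 t_incr) ?j1 ?(ltnW jk) // (_ : j.+1.-1 = j) //.
rewrite ler_wpM2l //.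
have h1 : c j.+1 <= c k by rewrite c_le ?jk.
have h2 : c j < c j.+1 by rewrite c_lt // leqnn (leq_trans jk kN).
have h3 : c j.-1 < c j by rewrite c_lt // prednK // leqnn (leq_trans (ltnW jk) kN).
apply: (slope_antitone (powR_chord_decr g_gt0 g_lt1)); lra.
Qed.

Hypothesis tau_mono : forall n, (2 <= n <= N)%N -> tau t n.-1 <= tau t n.

Lemma acoef_shift m k : (1 <= k)%N -> (k < m <= N)%N -> a m k.+1 <= a m.-1 k.
Proof.
move=> k1 /andP[km mN].
have m1 : (1 <= m.-1)%N by rewrite -ltnS prednK // (leq_trans _ km).
have km1 : (k <= m.-1)%N by rewrite -ltnS prednK // (leq_trans _ km).
rewrite (acoef_slope alpha01 t_incr) ?km ?(leq_trans k1) // (acoef_slope alpha01 t_incr) ?k1 ?km1 ?(leq_trans (leq_pred m)) //.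
rewrite (_ : k.+1.-1 = k) // ler_wpM2l //.
have e1 : c k.+1 - c k <= c m - c m.-1.
  by rewrite (tmid_step t (isT : (0 < k.+1)%N)) (tmid_step t) ?(leq_trans k1 (ltnW km)) // (tauh_mono t_incr tau_mono) ?km.
have e2 : c k - c k.-1 <= c m - c m.-1.
  by rewrite !(tmid_step t) ?(leq_trans k1 (ltnW km)) // (tauh_mono t_incr tau_mono) ?k1 ?(ltnW km).
have h1 : c k <= c m.-1 by rewrite c_le ?km1 ?(leq_trans (leq_pred m) mN).
have h2 : c k.-1 < c k by rewrite c_lt // prednK // leqnn (leq_trans (ltnW km) mN).
have h3 : c k < c k.+1 by rewrite c_lt // leqnn (leq_trans km mN).
apply: (slope_antitone (powR_chord_decr g_gt0 g_lt1)); lra.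
Qed.
End SignConditions.

Theorem lemma2p5 (R : realType) (T alpha : R) (N : nat) (t : nat -> R) :
  0 < T -> 0 < alpha < 1 -> (0 < N)%N ->
  t 0%N = 0 -> t N = T ->
  (forall n : nat, (1 <= n <= N)%N -> t n.-1 < t n) ->
  (forall n : nat, (2 <= n <= N)%N -> tau t n.-1 <= tau t n) ->
  forall n : nat, (1 <= n <= N)%N ->
  forall w : nat -> R,
    0 <= \sum_(1 <= k < n.+1)
           w k * \sum_(1 <= j < k.+1) pker t alpha k (k - j)%N * w j.
Proof.
move=> _ alpha01 _ _ _ t_incr tau_mono n /andP[n1 nN] w.
have le_N m : (m <= n)%N -> (m <= N)%N by move/leq_trans; apply.
have [G0|G_neq0] := eqVneq (Gamma (1 - alpha)) 0.
  (* Gamma(1 - alpha) = 0 never happens, but excluding it is unnecessary: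
     every diagonal coefficient, hence every kernel, would vanish. *)
  rewrite big_nat big1 // => k /andP[k1 kn]; rewrite big_nat big1 ?mulr0 // => j /andP[j1 jk].
  by rewrite pker_eq0 ?mul0r // (acoef_diag_eq0 alpha01 t_incr) // j1 le_N // -ltnS (leq_trans jk).
apply: (kernel_form_ge0 (a := acoef t alpha)) => [k /andP[k1 kn] | k m m1 /andP[mk kn] | k j j1 /andP[jk kn]
                          | m k k1 /andP[km mn] | m k km mn].
- by rewrite pker0 mulVf // (acoef_diag_neq0 alpha01 t_incr) // k1 le_N.
- rewrite pkerS // mulrA mulfV ?mul1r // (acoef_diag_neq0 alpha01 t_incr) //.
  by rewrite m1 le_N // ltnW // (leq_trans mk kn).
- by rewrite (acoef_incr alpha01 t_incr) // jk le_N.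
- by rewrite (acoef_shift alpha01 t_incr tau_mono) // km le_N.
- exact: (acoef_ge0 alpha01 t_incr km (le_N _ mn)).
Qed.
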